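(* Let $S$ be epsilon-strongly graded and suppose the set of epsilon-central elements of $B(\mathcal{E}_G)^*$ is the finite set $\{e_1,\dots,e_k\}$. Put $e'=1_S-\sum_{j=1}^ke_j$. Then $e_1,\dots,e_k,e'$ are pairwise orthogonal central idempotents of $S$ summing to $1_S$, and $S=\bigoplus_{i=1}^ke_iS\oplus e'S$. Moreover: (i) for each $i$, $e_iS=\bigoplus_{g\in N(e_i)}e_iS_g$ is strongly $N(e_i)$-graded, and $e_i$ cannot be written as $f_1+\dots+f_m$ with $m\ge2$ and $f_1,\dots,f_m\in B(\mathcal{E}_G)^*$ pairwise orthogonal; (ii) if $e'=0$, then $S_N=\bigoplus_{g\in N}S_g$ is strongly $N$-graded, where $N=\bigcap_{i=1}^kN(e_i)$; (iii) if $e'\neq0$, then $e'S=\bigoplus_{g\in G}e'S_g$ is an epsilon-strongly $G$-graded ring (with identity $e'$ and $\epsilon'_g=e'\epsilon_g$).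
   Context: $G$ is a group with identity $e$; $S=\bigoplus_{g\in G}S_g$ is an associative unital ring graded by $G$, $R=S_e$, $XY$ denotes finite sums of products. $S$ is epsilon-strongly graded: each ideal $S_gS_{g^{-1}}$ of $R$ has an identity $\epsilon_g$ with $\epsilon_gs=s=s\epsilon_{g^{-1}}$ for $s\in S_g$; $\epsilon_e=1_S$; each $\epsilon_g$ is an idempotent in $Z(R)$. $B(\mathcal{E}_G)$ is the multiplicative semigroup generated by $\{\epsilon_g:g\in G\}$, $B(\mathcal{E}_G)^*=B(\mathcal{E}_G)\setminus\{0\}$, ordered by $a\le b$ iff $a=ab$. For $r\in B(\mathcal{E}_G)^*$, $N(r)=\{g\in G:r\epsilon_g=r\}$. An element $r\in B(\mathcal{E}_G)^*$ is epsilon-central if it is minimal in $B(\mathcal{E}_G)^*$ and $N(r)$ is a subgroup of $G$ (equivalently, for minimal $r$, $r$ is central in $S$). A ring graded by a group $H$ is strongly $H$-graded if $A_gA_h=A_{gh}$ for all $g,h\in H$. *)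

From HB Require Import structures.
From mathcomp Require Import all_boot all_algebra.

Set Implicit Arguments.
Unset Strict Implicit.
Unset Printing Implicit Defensive.

Import GRing.Theory.
Local Open Scope ring_scope.

Record is_group (G : eqType) (mul : G -> G -> G) (inv : G -> G) (e : G) : Prop :=
  IsGroup {
    grp_assoc : forall x y z, mul x (mul y z) = mul (mul x y) z;
    grp_idl : forall x, mul e x = x;
    grp_invl : forall x, mul (inv x) x = e }.

Section GradedDefs.

Variables (G : eqType) (mul : G -> G -> G) (inv : G -> G) (e : G).
Variable S : pzRingType.

Definition prodset (X Y : S -> Prop) (z : S) : Prop :=
  exists n (a b : 'I_n -> S),
    (forall i, X (a i)) /\ (forall i, Y (b i)) /\ z = \sum_(i < n) a i * b i.

Definition is_subgroup (H : G -> Prop) : Prop :=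
  [/\ H e, (forall g h, H g -> H h -> H (mul g h)) & (forall g, H g -> H (inv g))].

(* The ring A (an additive subgroup of S closed under products, with
   identity u; u need not be 1_S) is graded by the subgroup H of G with
   homogeneous components A_ h (h in H): A = (+)_{h in H} A_ h. *)
Record graded_sub (A : S -> Prop) (u : S) (H : G -> Prop) (A_ : G -> S -> Prop) : Prop :=
  GradedSub {
    gs_group : is_subgroup H;
    gs_unit_mem : A u;
    gs_unit : forall x, A x -> u * x = x /\ x * u = x;
    gs_sub : forall x y, A x -> A y -> A (x - y);
    gs_mul : forall x y, A x -> A y -> A (x * y);
    gs_comp_in : forall h x, H h -> A_ h x -> A x;
    gs_comp_zero : forall h, H h -> A_ h 0;
    gs_comp_sub : forall h x y, H h -> A_ h x -> A_ h y -> A_ h (x - y);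
    gs_comp_mul : forall g h x y, H g -> H h -> A_ g x -> A_ h y -> A_ (mul g h) (x * y);
    gs_unit_comp : A_ e u;
    gs_decomp : forall a, A a -> exists (l : seq G) (x : G -> S),
        [/\ uniq l, (forall g, g \in l -> H g /\ A_ g (x g)) & a = \sum_(g <- l) x g];
    gs_indep : forall (l : seq G) (x : G -> S), uniq l ->
        (forall g, g \in l -> H g /\ A_ g (x g)) ->
        \sum_(g <- l) x g = 0 -> forall g, g \in l -> x g = 0 }.

Definition strongly_graded (A : S -> Prop) (u : S) (H : G -> Prop) (A_ : G -> S -> Prop) : Prop :=
  graded_sub A u H A_ /\
  forall g h, H g -> H h -> forall x, prodset (A_ g) (A_ h) x <-> A_ (mul g h) x.

Definition eps_strongly_graded (A : S -> Prop) (u : S) (A_ : G -> S -> Prop) (eps : G -> S) : Prop :=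
  graded_sub A u (fun _ => True) A_ /\
  forall g,
    [/\ prodset (A_ g) (A_ (inv g)) (eps g),
        (forall x, prodset (A_ g) (A_ (inv g)) x -> eps g * x = x /\ x * eps g = x) &
        (forall s, A_ g s -> eps g * s = s /\ s * eps (inv g) = s)].

Variable eps : G -> S.

(* B(E_G): multiplicative semigroup generated by the eps g. *)
Definition inB (x : S) : Prop :=
  exists l : seq G, l <> [::] /\ x = \prod_(g <- l) eps g.

Definition Bstar (x : S) : Prop := inB x /\ x <> 0.

Definition leB (a b : S) : Prop := a = a * b.

Definition minimalB (r : S) : Prop :=
  Bstar r /\ forall y, Bstar y -> leB y r -> y = r.

Definition Nset (r : S) (g : G) : Prop := r * eps g = r.

Definition eps_central (r : S) : Prop := minimalB r /\ is_subgroup (Nset r).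

End GradedDefs.

(* Let S be epsilon-strongly G-graded and R = S_e.  The idempotents eps g are
   central in R and satisfy the conjugation rule s * eps h = eps (g h) * s for
   s in S_g.
   The theorem follows: the e_i are orthogonal central idempotents with
   complement e'; (i) and (iii) are corner statements, and for (ii) e' = 0
   forces eps g = 1 for every g in N = meet of the N(e_i). *)
From HB Require Import structures.
From mathcomp Require Import all_boot all_algebra.
Import GRing.Theory.
Local Open Scope ring_scope.
Set Implicit Arguments.
Unset Strict Implicit.

Lemma merge_terms (I : eqType) (V : nmodType) (P : I -> V -> Prop)
    (Padd : forall i a b, P i a -> P i b -> P i (a + b))
    (ps : seq (I * V)) : (forall p, p \in ps -> P p.1 p.2) ->
  exists (l : seq I) (y : I -> V), [/\ uniq l, (forall i, i \in l -> P i (y i)) &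
    \sum_(p <- ps) p.2 = \sum_(i <- l) y i].
Proof.
elim: ps => [|[h z] ps IH] Hps; first by exists [::], (fun _ => 0); rewrite !big_nil.
have [l [y [Hu Hy Hs]]] : exists (l : seq I) (y : I -> V), [/\ uniq l,
    (forall i, i \in l -> P i (y i)) & \sum_(p <- ps) p.2 = \sum_(i <- l) y i].
  by apply: IH => p Hp; apply: Hps; rewrite inE Hp orbT.
have Hhz : P h z by apply: (Hps (h, z)); exact: mem_head.
rewrite big_cons Hs /=.
case: (boolP (h \in l)) => Hh.
  exists l, (fun i => if i == h then z + y i else y i); split => //.
    by move=> i Hi; case: eqP => [->|_]; [apply: Padd => //; exact: Hy | exact: Hy].
  rewrite (bigD1_seq h Hh Hu) /= (bigD1_seq h Hh Hu) /= eqxx addrA; congr (_ + _).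
  by apply: eq_bigr => i /negPf ->.
exists (h :: l), (fun i => if i == h then z else y i); split.
- by rewrite /= Hh Hu.
- by move=> i; rewrite inE; case: eqP => [-> _ | _ /= Hi]; [exact: Hhz | exact: Hy].
rewrite big_cons eqxx; congr (_ + _); apply: eq_big_seq => i Hi.
by have /negPf -> : i != h by apply: contraNneq Hh => <-.
Qed.

Section GroupLaws.
Variables (G : eqType) (mul : G -> G -> G) (inv : G -> G) (e : G).
Hypothesis Hgrp : is_group mul inv e.

Lemma mulgA x y z : mul x (mul y z) = mul (mul x y) z.
Proof. exact: (grp_assoc Hgrp x y z). Qed.
Lemma mul1g x : mul e x = x.
Proof. exact: (grp_idl Hgrp x). Qed.
Lemma mulVg x : mul (inv x) x = e.
Proof. exact: (grp_invl Hgrp x). Qed.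
Lemma mulgV x : mul x (inv x) = e.
Proof.
rewrite -{1}(mul1g (mul x (inv x))) -{1}(mulVg (inv x)) -mulgA (mulgA (inv x)).
by rewrite mulVg mul1g mulVg.
Qed.
Lemma mulg1 x : mul x e = x.
Proof. by rewrite -(mulVg x) mulgA mulgV mul1g. Qed.
Lemma inv_uniq x y : mul x y = e -> x = inv y.
Proof. by move=> H; rewrite -(mulg1 x) -(mulgV y) mulgA H mul1g. Qed.
Lemma invK x : inv (inv x) = x.
Proof. by rewrite -(inv_uniq (mulgV x)). Qed.
Lemma invM x y : inv (mul x y) = mul (inv y) (inv x).
Proof.
symmetry; apply: inv_uniq.
by rewrite -mulgA (mulgA (inv x)) mulVg mul1g mulVg.
Qed.
Lemma mulKg x y : mul (inv x) (mul x y) = y.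
Proof. by rewrite mulgA mulVg mul1g. Qed.
Lemma mulKVg x y : mul x (mul (inv x) y) = y.
Proof. by rewrite mulgA mulgV mul1g. Qed.

End GroupLaws.

Section EpsStronglyGraded.
Variables (G : eqType) (mul : G -> G -> G) (inv : G -> G) (e : G)
  (S : pzRingType) (S_ : G -> S -> Prop) (eps : G -> S).
Hypothesis Hgrp : is_group mul inv e.
Hypothesis Hes : eps_strongly_graded mul inv e (fun _ => True) 1 S_ eps.

Lemma gradedS : graded_sub mul inv e (fun _ => True) 1 (fun _ => True) S_.
Proof. exact: Hes.1. Qed.

Lemma S0 g : S_ g 0.
Proof. exact: (gs_comp_zero gradedS (h:=g) I). Qed.
Lemma Ssub g x y : S_ g x -> S_ g y -> S_ g (x - y).
Proof. exact: (gs_comp_sub gradedS (h:=g) I). Qed.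
Lemma Sopp g x : S_ g x -> S_ g (- x).
Proof. by move=> H; have := Ssub (S0 g) H; rewrite sub0r. Qed.
Lemma Sadd g x y : S_ g x -> S_ g y -> S_ g (x + y).
Proof. by move=> Hx Hy; have := Ssub Hx (Sopp Hy); rewrite opprK. Qed.
Lemma Ssum g n (f : 'I_n -> S) : (forall i, S_ g (f i)) -> S_ g (\sum_i f i).
Proof. by move=> H; apply: big_ind => //; [exact: S0 | exact: Sadd]. Qed.
Lemma Smul g h x y : S_ g x -> S_ h y -> S_ (mul g h) (x * y).
Proof. exact: (gs_comp_mul gradedS (g:=g) (h:=h) I I). Qed.
Lemma S1 : S_ e 1.
Proof. exact: (gs_unit_comp gradedS). Qed.
Lemma Sdecomp s : exists (l : seq G) (x : G -> S),
  [/\ uniq l, (forall g, g \in l -> True /\ S_ g (x g)) & s = \sum_(g <- l) x g].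
Proof. exact: (gs_decomp gradedS (a:=s) I). Qed.

Lemma SmulR g x y : S_ e x -> S_ g y -> S_ g (x * y).
Proof. by move=> Hx Hy; have := Smul Hx Hy; rewrite (mul1g Hgrp). Qed.

Lemma prodsetS g h x : prodset (S_ g) (S_ h) x -> S_ (mul g h) x.
Proof. by case=> n [a [b [Ha [Hb ->]]]]; apply: Ssum => i; exact: Smul. Qed.

Lemma eps_hom g s : S_ g s -> eps g * s = s /\ s * eps (inv g) = s.
Proof. by case: (Hes.2 g) => _ _; apply. Qed.
Lemma eps_Se g : S_ e (eps g).
Proof. by rewrite -(mulgV Hgrp g); apply: prodsetS; case: (Hes.2 g). Qed.
Lemma eps_idem g : eps g * eps g = eps g.
Proof. by case: (Hes.2 g) => P1 P2 _; rewrite (P2 _ P1).1. Qed.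

(* eps g is central in R: both x eps_g and eps_g x lie in the ideal
   S_g S_{g^-1}, of which eps_g is a two-sided identity. *)
Lemma eps_centR g x : S_ e x -> eps g * x = x * eps g.
Proof.
move=> Hx; case: (Hes.2 g) => [[n [a [b [Ha [Hb Hab]]]]] Hid _].
have Hxe : prodset (S_ g) (S_ (inv g)) (x * eps g).
  exists n, (fun i => x * a i), b; split; first by move=> i; exact: SmulR.
  by split=> //; rewrite Hab mulr_sumr; apply: eq_bigr => i _; rewrite mulrA.
have Hex : prodset (S_ g) (S_ (inv g)) (eps g * x).
  exists n, a, (fun i => b i * x); split=> //; split.
    by move=> i; have := Smul (Hb i) Hx; rewrite (mulg1 Hgrp).
  by rewrite Hab mulr_suml; apply: eq_bigr => i _; rewrite mulrA.
by rewrite -{1}(Hid _ Hex).2 -mulrA (Hid _ Hxe).1.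
Qed.

Lemma eps_conj g h s : S_ g s -> s * eps h = eps (mul g h) * s.
Proof.
move=> Hs.
case: (Hes.2 h) => [[n [a [b [Ha [Hb Hab]]]]] _ _].
case: (Hes.2 (mul g h)) => [[m [c [d [Hc [Hd Hcd]]]]] _ _].
have E1 : eps (mul g h) * (s * eps h) = s * eps h.
  rewrite Hab !mulr_sumr; apply: eq_bigr => i _.
  by rewrite [s * _]mulrA mulrA (eps_hom (Smul Hs (Ha i))).1.
have E2 : eps (mul g h) * s * eps h = eps (mul g h) * s.
  rewrite Hcd !mulr_suml; apply: eq_bigr => j _.
  have Hds : S_ (inv h) (d j * s).
    by have := Smul (Hd j) Hs; rewrite (invM Hgrp) -(mulgA Hgrp) (mulVg Hgrp) (mulg1 Hgrp).
  have := (eps_hom Hds).2; rewrite (invK Hgrp) => E.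
  by rewrite -[c j * d j * s]mulrA -mulrA E.
by rewrite -E1 mulrA E2.
Qed.

Definition prodl (l : seq G) : S := \prod_(g <- l) eps g.

Lemma prodl_Se l : S_ e (prodl l).
Proof.
elim: l => [|g l IH]; rewrite /prodl ?big_nil ?big_cons; first exact: S1.
exact: SmulR (eps_Se g) IH.
Qed.
Lemma prodl_centR l x : S_ e x -> prodl l * x = x * prodl l.
Proof.
move=> Hx; elim: l => [|g l IH]; rewrite /prodl ?big_nil ?big_cons ?mul1r ?mulr1 //.
by rewrite -mulrA -/(prodl l) IH mulrA eps_centR // mulrA.
Qed.
Lemma prodl_comm l l' : prodl l * prodl l' = prodl l' * prodl l.
Proof. exact: prodl_centR (prodl_Se l'). Qed.
Lemma prodl_idem l : prodl l * prodl l = prodl l.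
Proof.
elim: l => [|g l IH]; rewrite /prodl ?big_nil ?big_cons ?mul1r //.
rewrite -/(prodl l) -mulrA (mulrA (prodl l)) (prodl_centR l (eps_Se g)).
by rewrite -mulrA IH mulrA eps_idem.
Qed.
Lemma prodl_mem h l : h \in l -> prodl l * eps h = prodl l.
Proof.
elim: l => [|g l IH] //; rewrite inE /prodl big_cons -/(prodl l) => /orP [/eqP ->|Hh].
  by rewrite -mulrA (prodl_centR l (eps_Se _)) mulrA eps_idem.
by rewrite -mulrA IH.
Qed.
Lemma prodl_conj g l s : S_ g s -> s * prodl l = prodl (map (mul g) l) * s.
Proof.
move=> Hs; elim: l => [|h l IH]; rewrite /prodl ?big_nil ?mul1r ?mulr1 //.
by rewrite /= !big_cons -!/(prodl _) mulrA (eps_conj h Hs) -mulrA IH mulrA.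
Qed.
Lemma prodl_absorb r l : (forall h, h \in l -> r * eps h = r) -> r * prodl l = r.
Proof.
elim: l => [|g l IH] H; rewrite /prodl ?big_nil ?mulr1 // big_cons mulrA H ?mem_head //.
by apply: IH => h Hh; apply: H; rewrite inE Hh orbT.
Qed.

Lemma inB_eps g : inB eps (eps g).
Proof. by exists [:: g]; rewrite big_seq1. Qed.

Lemma Bstar_prodl x : Bstar eps x -> exists l, x = prodl l.
Proof. by case=> [[l [_ ->]] _]; exists l. Qed.

Lemma Bstar_idem x : Bstar eps x -> x * x = x.
Proof. by case/Bstar_prodl => l ->; exact: prodl_idem. Qed.

Lemma minimal_Se r : minimalB eps r -> S_ e r.
Proof. by case=> /Bstar_prodl [l ->] _; exact: prodl_Se. Qed.

(* A minimal element r of B* either kills or is absorbed by each x in B: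
   r x is in B and r x <= r, so r x = 0 or r x = r. *)
Lemma minimal_dichotomy r x : minimalB eps r -> inB eps x -> r * x = 0 \/ r * x = r.
Proof.
case=> [[[l0 [Hl0 ->]] Hr0] Hmin] [l [_ ->]].
case: (eqVneq (prodl l0 * prodl l) 0) => H; [by left | right].
apply: Hmin; last by rewrite /leB -mulrA (prodl_comm l) mulrA prodl_idem.
split; last exact/eqP.
by exists (l0 ++ l); split; [case: {H Hr0} l0 Hl0 | rewrite big_cat].
Qed.

Lemma minimal_orth r1 r2 : minimalB eps r1 -> minimalB eps r2 -> r1 <> r2 ->
  r1 * r2 = 0.
Proof.
move=> H1 H2 Hne.
have [l1 E1] := Bstar_prodl H1.1; have [l2 E2] := Bstar_prodl H2.1.
have Hc : r1 * r2 = r2 * r1 by rewrite E1 E2 prodl_comm.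
case: (minimal_dichotomy H1 H2.1.1) => // Ha.
case: (minimal_dichotomy H2 H1.1.1) => Hb; first by rewrite Hc.
by case: Hne; rewrite -Ha Hc Hb.
Qed.

(* A minimal element of B* is not a sum of two or more pairwise orthogonal
   elements of B*: each summand f_j satisfies f_j <= r, hence equals r, and
   then f_0 f_1 = r r = r is nonzero. *)
Lemma minimal_indecomposable r : minimalB eps r ->
  ~ (exists m (f : 'I_m -> S),
       [/\ (2 <= m)%N, (forall j, Bstar eps (f j)),
           (forall j j', j != j' -> f j * f j' = 0) & r = \sum_(j < m) f j]).
Proof.
move=> Hm [m [f [Hm2 HB Horth Hsum]]].
have fr j : f j * r = f j.
  rewrite Hsum mulr_sumr (bigD1 j) //= Bstar_idem // big1 ?addr0 // => j' Hj'.
  by apply: Horth; rewrite eq_sym.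
have fj j : f j = r by apply: Hm.2 => //; rewrite /leB fr.
have H01 := Horth (Ordinal (ltnW Hm2)) (Ordinal Hm2) isT.
by rewrite !fj Bstar_idem in H01; [case: Hm.1 | exact: Hm.1].
Qed.

(* For s in
   S_g: if r eps_g = 0 both r s and s r vanish; otherwise g is in N(r) and,
   writing r as a product of eps's, conjugation by s only moves the indices
   inside the subgroup N(r), which r absorbs. *)
Lemma central_hom r g s : eps_central mul inv e eps r -> S_ g s -> r * s = s * r.
Proof.
case=> Hm [_ HNmul HNinv] Hs.
have [l0 Er] := Bstar_prodl Hm.1.
have Nl0 h : h \in l0 -> r * eps h = r by move=> Hh; rewrite Er prodl_mem.
case: (minimal_dichotomy Hm (inB_eps g)) => Hg.
  have -> : r * s = 0 by rewrite -(eps_hom Hs).1 mulrA Hg mul0r.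
  case: (minimal_dichotomy Hm (inB_eps (inv g))) => Hig.
    by rewrite -(eps_hom Hs).2 -mulrA Er -(prodl_centR l0 (eps_Se _)) -Er Hig mulr0.
  exfalso; apply: Hm.1.2; rewrite -Hg.
  by have := HNinv _ Hig; rewrite /Nset (invK Hgrp) => ->.
have Hsr : s * r = prodl (map (mul g) l0) * s by rewrite Er (prodl_conj l0 Hs).
have Hrs : r * s = s * prodl (map (mul (inv g)) l0).
  rewrite (prodl_conj _ Hs) -map_comp (@eq_map _ _ _ id) ?map_id -?Er //.
  by move=> h /=; rewrite (mulKVg Hgrp).
have A1 : r * prodl (map (mul g) l0) = r.
  by apply: prodl_absorb => h /mapP [h0 Hh0 ->]; apply: HNmul; [exact: Hg | exact: Nl0].
have A2 : r * prodl (map (mul (inv g)) l0) = r.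
  by apply: prodl_absorb => h /mapP [h0 Hh0 ->]; apply: HNmul; [exact: HNinv | exact: Nl0].
have E1 : r * s * r = r * s by rewrite -mulrA Hsr mulrA A1.
have E2 : r * s * r = s * r by rewrite Hrs -mulrA Er prodl_comm -Er A2.
by rewrite -E1 E2.
Qed.

Lemma central_all r s : eps_central mul inv e eps r -> r * s = s * r.
Proof.
move=> Hc; have [l [x [_ Hx ->]]] := Sdecomp s.
rewrite mulr_sumr mulr_suml; apply: eq_big_seq => g Hg.
exact: central_hom Hc (Hx g Hg).2.
Qed.

Section Corner.
Variables (u : S) (Hue : S_ e u) (Huu : u * u = u) (Huc : forall s, u * s = s * u).

Definition corner (x : S) : Prop := exists s, x = u * s.
Definition corner_comp (g : G) (x : S) : Prop := exists s, S_ g s /\ x = u * s.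

Lemma corner_compE g x : corner_comp g x <-> S_ g x /\ x = u * x.
Proof.
split; last by case=> H1 H2; exists x.
by case=> s [Hs ->]; split; [exact: SmulR | rewrite mulrA Huu].
Qed.

Lemma corner_mul x y : u * x * (u * y) = u * (x * y).
Proof. by rewrite (Huc y) mulrA -Huc !mulrA Huu -mulrA. Qed.

Lemma corner_graded (H : G -> Prop) : is_subgroup mul inv e H ->
  (forall g s, S_ g s -> u * s != 0 -> H g) ->
  graded_sub mul inv e corner u H corner_comp.
Proof.
move=> HH Hz; constructor => //.
- by exists 1; rewrite mulr1.
- by move=> x [s ->]; rewrite mulrA Huu -Huc mulrA Huu.
- by move=> x y [s ->] [t ->]; exists (s - t); rewrite mulrBr.
- by move=> x y [s ->] [t ->]; exists (s * (u * t)); rewrite -mulrA.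
- by move=> h x _ [s [_ ->]]; exists s.
- by move=> h _; exists 0; rewrite mulr0; split => //; exact: S0.
- move=> h x y _ [s [Hs ->]] [t [Ht ->]].
  by exists (s - t); split; [exact: Ssub | rewrite mulrBr].
- move=> g h x y _ _ [s [Hs ->]] [t [Ht ->]].
  by exists (s * t); split; [exact: Smul | rewrite corner_mul].
- by exists 1; rewrite mulr1; split => //; exact: S1.
- move=> a [s ->]; have [l [x [Hu Hx Hs]]] := Sdecomp s.
  exists [seq g <- l | u * x g != 0], (fun g => u * x g); split.
  + exact: filter_uniq.
  + move=> g; rewrite mem_filter => /andP [Hn Hg].
    by split; [exact: Hz (Hx g Hg).2 Hn | exists (x g); split; [exact: (Hx g Hg).2|]].
  + rewrite Hs mulr_sumr big_filter [RHS]big_mkcond /=; apply: eq_bigr => g _.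
    by case: eqP => // ->.
- move=> l x Hu Hl Hsum g Hg; apply: (gs_indep gradedS Hu _ Hsum Hg) => h Hh.
  by have /corner_compE [] := (Hl h Hh).2.
Qed.

Lemma corner_eps_strongly_graded :
  eps_strongly_graded mul inv e corner u corner_comp (fun g => u * eps g).
Proof.
split; first by apply: corner_graded.
move=> g; case: (Hes.2 g) => [[n [a [b [Ha [Hb Hab]]]]] Hid Hhom]; split.
- exists n, (fun i => u * a i), (fun i => u * b i); split; first by move=> i; exists (a i).
  split; first by move=> i; exists (b i).
  by rewrite Hab mulr_sumr; apply: eq_bigr => i _; rewrite corner_mul.
- move=> x [m [c [d [Hc [Hd Ex]]]]].
  have Hc' i := (corner_compE g (c i)).1 (Hc i).
  have Hd' i := (corner_compE (inv g) (d i)).1 (Hd i).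
  have Hp : prodset (S_ g) (S_ (inv g)) x.
    by exists m, c, d; split; [move=> i; case: (Hc' i) | split => // i; case: (Hd' i)].
  have Hux : u * x = x.
    by rewrite Ex mulr_sumr; apply: eq_bigr => i _; rewrite mulrA -(Hc' i).2.
  have [E1 E2] := Hid _ Hp.
  by split; [rewrite -mulrA E1 Hux | rewrite mulrA -Huc Hux E2].
- move=> s /corner_compE [Hs Es]; have [E1 E2] := Hhom _ Hs.
  by split; [rewrite -mulrA E1 -Es | rewrite mulrA -Huc -Es E2].
Qed.

End Corner.

(* Degrees outside N(r) contribute nothing since r eps_g = 0 there; for g in
   N(r) write eps_g = sum_j a_j b_j with a_j in S_g, b_j in S_{g^-1}, so that
   r s = r eps_g s = sum_j (r a_j)(r b_j s) for every s in S_gh. *)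
Lemma central_corner_strongly_graded r : eps_central mul inv e eps r ->
  strongly_graded mul inv e (corner r) r (Nset eps r) (corner_comp r).
Proof.
move=> Hc; have Hm := Hc.1; have Hre := minimal_Se Hm; have Hrr := Bstar_idem Hm.1.
have Hcen s : r * s = s * r by exact: central_all Hc.
split.
  apply: corner_graded => //; first exact: Hc.2.
  move=> g s Hs /eqP Hn; case: (minimal_dichotomy Hm (inB_eps g)) => // Hg.
  by case: Hn; rewrite -(eps_hom Hs).1 mulrA Hg mul0r.
move=> g h Hg Hh x; split.
  case=> n [a [b [Ha [Hb ->]]]]; apply/(corner_compE Hre Hrr).
  have Ha' i := (corner_compE Hre Hrr g (a i)).1 (Ha i).
  have Hb' i := (corner_compE Hre Hrr h (b i)).1 (Hb i).
  split.
    apply: prodsetS; exists n, a, b.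
    by split; [move=> i; case: (Ha' i) | split => // i; case: (Hb' i)].
  by rewrite mulr_sumr; apply: eq_bigr => i _; rewrite mulrA -(Ha' i).2.
case=> s [Hs ->]; case: (Hes.2 g) => [[n [a [b [Ha [Hb Hab]]]]] _ _].
exists n, (fun j => r * a j), (fun j => r * (b j * s)); split; first by move=> j; exists (a j).
split.
  move=> j; exists (b j * s); split => //.
  by have := Smul (Hb j) Hs; rewrite (mulKg Hgrp).
rewrite -{1}Hg Hab mulr_sumr mulr_suml; apply: eq_bigr => j _.
by rewrite (corner_mul Hrr Hcen) !mulrA.
Qed.

Section UnitalPart.
Variable N : G -> Prop.
Hypothesis HN : is_subgroup mul inv e N.
Hypothesis epsN : forall g, N g -> eps g = 1.

Definition Nsum (x : S) : Prop := exists (l : seq G) (y : G -> S),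
  (forall g, g \in l -> N g /\ S_ g (y g)) /\ x = \sum_(g <- l) y g.

(* Sums over lists of (degree, component) pairs are the convenient form for
   closure under the ring operations; merging terms of equal degree brings
   them back to sums over distinct degrees. *)
Definition Npairs (ps : seq (G * S)) : Prop :=
  forall p, p \in ps -> N p.1 /\ S_ p.1 p.2.

Lemma Npairs_sum ps : Npairs ps -> exists (l : seq G) (y : G -> S),
  [/\ uniq l, (forall g, g \in l -> N g /\ S_ g (y g)) & \sum_(p <- ps) p.2 = \sum_(g <- l) y g].
Proof.
apply: (merge_terms (P := fun g a => N g /\ S_ g a)).
by move=> g a b [Hg Ha] [_ Hb]; split => //; exact: Sadd.
Qed.

Lemma Nsum_pairs x : Nsum x -> exists ps, Npairs ps /\ x = \sum_(p <- ps) p.2.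
Proof.
move=> [l [y [Hl ->]]]; exists [seq (g, y g) | g <- l]; rewrite big_map.
by split => // p /mapP [g Hg ->]; exact: Hl.
Qed.

Lemma Nsum_of_pairs ps : Npairs ps -> Nsum (\sum_(p <- ps) p.2).
Proof. by move/Npairs_sum => [l [y [_ Hl ->]]]; exists l, y. Qed.

Lemma Nsum_hom h x : N h -> S_ h x -> Nsum x.
Proof.
move=> Hh Hx; exists [:: h], (fun _ => x); rewrite big_seq1.
by split => // g /[!inE] /eqP ->.
Qed.

Lemma Nsum_sub x y : Nsum x -> Nsum y -> Nsum (x - y).
Proof.
move=> /Nsum_pairs [ps [Hps ->]] /Nsum_pairs [qs [Hqs ->]].
have := @Nsum_of_pairs (ps ++ [seq (q.1, - q.2) | q <- qs]).
rewrite big_cat big_map sumrN; apply => p; rewrite mem_cat => /orP [/Hps //|].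
by case/mapP => q /Hqs [Nq Sq] ->; split => //; exact: Sopp.
Qed.

Lemma Nsum_mul x y : Nsum x -> Nsum y -> Nsum (x * y).
Proof.
case: HN => _ HNmul _ /Nsum_pairs [ps [Hps ->]] /Nsum_pairs [qs [Hqs ->]].
have := @Nsum_of_pairs [seq (mul p.1 q.1, p.2 * q.2) | p <- ps, q <- qs].
have -> : (\sum_(p <- ps) p.2) * (\sum_(q <- qs) q.2) =
    \sum_(z <- [seq (mul p.1 q.1, p.2 * q.2) | p <- ps, q <- qs]) z.2.
  rewrite big_allpairs_dep mulr_suml; apply: eq_bigr => p _; exact: mulr_sumr.
apply.
move=> z /allpairsP [[p q] [/= /Hps [Np Sp] /Hqs [Nq Sq] ->]] /=.
by split; [exact: HNmul | exact: Smul].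
Qed.

Lemma Nsum_graded : graded_sub mul inv e Nsum 1 N S_.
Proof.
have [He _ _] := HN.
constructor => //.
- exact: Nsum_hom He S1.
- by move=> x _; rewrite mul1r mulr1.
- exact: Nsum_sub.
- exact: Nsum_mul.
- exact: Nsum_hom.
- by move=> h _; exact: S0.
- by move=> h x y _; exact: Ssub.
- by move=> g h x y _ _; exact: Smul.
- exact: S1.
- by move=> a /Nsum_pairs [ps [/Npairs_sum [l [y [Hu Hl Hs]]] ->]]; exists l, y.
- move=> l y Hu Hl Hsum g Hg; apply: (gs_indep gradedS Hu _ Hsum Hg) => h Hh.
  by split => //; case: (Hl h Hh).
Qed.

(* S_N is strongly N-graded: for x in S_gh, x = eps_g x = sum a_j (b_j x)
   with a_j in S_g and b_j x in S_h. *)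
Lemma Nsum_strongly_graded : strongly_graded mul inv e Nsum 1 N S_.
Proof.
split; first exact: Nsum_graded.
move=> g h Hg Hh x; split; first exact: prodsetS.
move=> Hx; case: (Hes.2 g) => [[n [a [b [Ha [Hb Hab]]]]] _ _].
exists n, a, (fun j => b j * x); split => //; split.
  by move=> j; have := Smul (Hb j) Hx; rewrite (mulKg Hgrp).
rewrite -[LHS]mul1r -(epsN Hg) Hab mulr_suml; apply: eq_bigr => j _.
by rewrite mulrA.
Qed.

End UnitalPart.

Section CentralFamily.
Variables (k : nat) (ec : 'I_k -> S).
Hypothesis Hinj : injective ec.
Hypothesis Hc : forall r, eps_central mul inv e eps r <-> exists i, r = ec i.

Lemma ec_central i : eps_central mul inv e eps (ec i).
Proof. by apply/Hc; exists i. Qed.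
Lemma ec_idem i : ec i * ec i = ec i.
Proof. exact: Bstar_idem (ec_central i).1.1. Qed.
Lemma ec_cent i s : ec i * s = s * ec i.
Proof. exact: central_all (ec_central i). Qed.
Lemma ec_orth i j : i != j -> ec i * ec j = 0.
Proof.
move=> Hij; apply: minimal_orth (ec_central i).1 (ec_central j).1 _.
by move/Hinj/eqP; apply/negP.
Qed.
Lemma ec_sum i : ec i * \sum_j ec j = ec i.
Proof.
rewrite mulr_sumr (bigD1 i) //= ec_idem big1 ?addr0 // => j Hj.
by apply: ec_orth; rewrite eq_sym.
Qed.

Definition ecompl : S := 1 - \sum_i ec i.

Lemma ecompl_Se : S_ e ecompl.
Proof.
by apply: Ssub; [exact: S1 | apply: Ssum => i; exact: minimal_Se (ec_central i).1].
Qed.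
Lemma ec_ecompl i : ec i * ecompl = 0.
Proof. by rewrite mulrBr mulr1 ec_sum subrr. Qed.
Lemma ecompl_ec i : ecompl * ec i = 0.
Proof. by rewrite -ec_cent ec_ecompl. Qed.
Lemma ecompl_cent s : ecompl * s = s * ecompl.
Proof.
rewrite mulrBl mulrBr mul1r mulr1 mulr_suml mulr_sumr; congr (_ - _).
by apply: eq_bigr => i _; exact: ec_cent.
Qed.
Lemma ecompl_idem : ecompl * ecompl = ecompl.
Proof.
rewrite {1}/ecompl mulrBl mul1r mulr_suml big1 ?subr0 // => i _.
exact: ec_ecompl.
Qed.

Lemma ec_decomp s : s = \sum_i ec i * s + ecompl * s.
Proof. by rewrite mulrBl mul1r -mulr_suml addrC subrK. Qed.

(* The sum S = (+)_i e_i S (+) e' S is direct: multiply a vanishing sum by e_j. *)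
Lemma ec_indep (x : 'I_k -> S) (y : S) :
  (forall i, exists s, x i = ec i * s) -> (exists s, y = ecompl * s) ->
  \sum_(i < k) x i + y = 0 -> (forall i, x i = 0) /\ y = 0.
Proof.
move=> Hx [t Ey] H0.
have Ej j : x j = 0.
  have := congr1 (fun z => ec j * z) H0.
  have Hz : \sum_(i < k | i != j) ec j * x i = 0.
    apply: big1 => i Hi; case: (Hx i) => s ->.
    by rewrite mulrA ec_orth ?mul0r // eq_sym.
  rewrite /= mulr0 mulrDr mulr_sumr (bigD1 j) //= Hz addr0 Ey mulrA ec_ecompl mul0r addr0.
  by case: (Hx j) => s Es; rewrite Es mulrA ec_idem.
by split => //; move: H0; rewrite big1 ?add0r.
Qed.

Lemma common_N_subgroup : is_subgroup mul inv e (fun g => forall i, Nset eps (ec i) g).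
Proof.
split.
- by move=> i; have [] := (ec_central i).2.
- by move=> g h Hg Hh i; have [_ Hmul _] := (ec_central i).2; exact: Hmul.
- by move=> g Hg i; have [_ _ Hinv] := (ec_central i).2; exact: Hinv.
Qed.

Lemma eps_common_N : ecompl = 0 -> forall g, (forall i, Nset eps (ec i) g) -> eps g = 1.
Proof.
move=> H0 g Hg; have Hs1 : \sum_i ec i = 1 by move/eqP: H0; rewrite subr_eq0 => /eqP.
by rewrite -[eps g]mul1r -{1}Hs1 mulr_suml (eq_bigr _ (fun i _ => Hg i)) Hs1.
Qed.

End CentralFamily.

End EpsStronglyGraded.

Unset Implicit Arguments.
Set Strict Implicit.

Theorem mainTheorem10 (G : eqType) (mul : G -> G -> G) (inv : G -> G) (e : G)
  (S : pzRingType) (S_ : G -> S -> Prop) (eps : G -> S)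
  (k : nat) (ec : 'I_k -> S) :
  is_group mul inv e ->
  eps_strongly_graded mul inv e (fun _ => True) 1 S_ eps ->
  injective ec ->
  (forall r : S, eps_central mul inv e eps r <-> exists i, r = ec i) ->
  let e' := 1 - \sum_(i < k) ec i in
  (* orthogonal central idempotents summing to 1 *)
  (forall i, ec i * ec i = ec i /\ forall s, ec i * s = s * ec i) /\
  (e' * e' = e' /\ forall s, e' * s = s * e') /\
  (forall i j, i != j -> ec i * ec j = 0) /\
  (forall i, ec i * e' = 0 /\ e' * ec i = 0) /\
  \sum_(i < k) ec i + e' = 1 /\
  (* S = (+)_i e_i S (+) e'S *)
  (forall s, s = \sum_(i < k) ec i * s + e' * s) /\
  (forall (x : 'I_k -> S) (y : S),
      (forall i, exists s, x i = ec i * s) -> (exists s, y = e' * s) ->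
      \sum_(i < k) x i + y = 0 -> (forall i, x i = 0) /\ y = 0) /\
  (* (i) *)
  (forall i,
      strongly_graded mul inv e (fun x => exists s, x = ec i * s) (ec i)
        (Nset eps (ec i)) (fun g x => exists s, S_ g s /\ x = ec i * s) /\
      ~ (exists m (f : 'I_m -> S),
           [/\ (2 <= m)%N, (forall j, Bstar eps (f j)),
               (forall j j', j != j' -> f j * f j' = 0) &
               ec i = \sum_(j < m) f j])) /\
  (* (ii) *)
  (e' = 0 ->
     strongly_graded mul inv e
       (fun x => exists (l : seq G) (y : G -> S),
          (forall g, g \in l -> (forall i, Nset eps (ec i) g) /\ S_ g (y g)) /\
          x = \sum_(g <- l) y g)
       1 (fun g => forall i, Nset eps (ec i) g) S_) /\
  (* (iii) *)
  (e' <> 0 ->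
     eps_strongly_graded mul inv e (fun x => exists s, x = e' * s) e'
       (fun g x => exists s, S_ g s /\ x = e' * s) (fun g => e' * eps g)).
Proof.
move=> Hgrp Hes Hinj Hc e'.
have Hci := ec_central Hc.
split.
  by move=> i; split; [exact: (ec_idem Hgrp Hes Hc i) | exact: (ec_cent Hgrp Hes Hc i)].
split.
  by split; [exact: (ecompl_idem Hgrp Hes Hinj Hc) | exact: (ecompl_cent Hgrp Hes Hc)].
split; first exact: (ec_orth Hgrp Hes Hinj Hc).
split.
  move=> i.
  by split; [exact: (ec_ecompl Hgrp Hes Hinj Hc i) | exact: (ecompl_ec Hgrp Hes Hinj Hc i)].
split; first by rewrite /e' addrC subrK.
split; first exact: ec_decomp.
split; first exact: (ec_indep Hgrp Hes Hinj Hc).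
split.
  move=> i; split; first exact: (central_corner_strongly_graded Hgrp Hes (Hci i)).
  exact: (minimal_indecomposable Hgrp Hes (Hci i).1).
split.
  move=> He'.
  exact: (Nsum_strongly_graded Hgrp Hes (common_N_subgroup Hc) (eps_common_N He')).
move=> _; exact: (corner_eps_strongly_graded Hgrp Hes (ecompl_Se Hgrp Hes Hc)
  (ecompl_idem Hgrp Hes Hinj Hc) (ecompl_cent Hgrp Hes Hc)).
Qed.
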